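(* Let $p,q\geq 2$ be relatively prime integers, let $c,c'\in A_{pq}^{\mathbb{Z}}$ and $k>0$. If $\mathrm{tr}_{p,q}(c,k)(i)=\mathrm{tr}_{p,q}(c',k)(i)$ for all $-(k-1)\leq i\leq k-1$, then $c(j)=c'(j)$ for all $1\leq j\leq k$.
   Context: For an integer $n>1$, $A_n=\{0,1,\dots,n-1\}$. For relatively prime integers $p,q\geq2$ define $g_{p,q}:A_{pq}\times A_{pq}\to A_{pq}$ by writing $x=x_1q+x_0$, $y=y_1q+y_0$ with $x_0,y_0\in A_q$, $x_1,y_1\in A_p$ (uniquely), and setting $g_{p,q}(x,y)=x_0p+y_1$. Define $F_{p,q}:A_{pq}^{\mathbb{Z}}\to A_{pq}^{\mathbb{Z}}$ by $F_{p,q}(c)(i)=g_{p,q}\big(g_{p,q}(c(i-1),c(i)),\,g_{p,q}(c(i),c(i+1))\big)$. The map $F_{p,q}$ is a bijection with inverse $F_{q,p}$ (same formulas with $p,q$ exchanged), so $F_{p,q}^n$ is defined for all $n\in\mathbb{Z}$. The $k$-trace of $c$ is the sequence $\mathrm{tr}_{p,q}(c,k)=(F_{p,q}^n(c)(k))_{n\in\mathbb{Z}}$. *)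

From Stdlib Require Import ZArith.
From mathcomp Require Import all_boot.
Set Implicit Arguments. Unset Strict Implicit. Unset Printing Implicit Defensive.

(* A configuration c : A_{pq}^Z is represented as a function Z -> nat whose
   values lie in A_{pq} = {0,...,pq-1}; see [config]. *)
Definition config (p q : nat) (c : Z -> nat) : Prop := forall i, c i < p * q.

(* g_{p,q}(x,y) = x0 * p + y1 where x = x1 q + x0, y = y1 q + y0,
   x0,y0 in A_q, x1,y1 in A_p (for x,y in A_pq: x0 = x mod q, y1 = y div q). *)
Definition g (p q : nat) (x y : nat) : nat := (x %% q) * p + y %/ q.

Definition F (p q : nat) (c : Z -> nat) : Z -> nat :=
  fun i => g p q (g p q (c (i - 1)%Z) (c i)) (g p q (c i) (c (i + 1)%Z)).

(* F_{p,q}^n for n in Z: nonnegative powers iterate F_{p,q}, negative powers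
   iterate the inverse F_{q,p}. *)
Definition Fpow (p q : nat) (n : Z) (c : Z -> nat) : Z -> nat :=
  match n with
  | Z0 => c
  | Zpos m => ssrnat.iter (Pos.to_nat m) (F p q) c
  | Zneg m => ssrnat.iter (Pos.to_nat m) (F q p) c
  end.

Definition trace (p q : nat) (c : Z -> nat) (k : Z) : Z -> nat :=
  fun n => Fpow p q n c k.

(* Write Phi(c)(i) = g_{p,q}(c(i-1), c(i)), so that F_{p,q}(c)(i) = Phi(Phi(c))(i+1).
   Since g_{q,p}(g_{p,q}(x,y), g_{p,q}(y,z)) = y, the map F_{q,p} inverts F_{p,q}.
   The high base-p digit of F_{p,q}(d)(i) is g_{p,q}(d(i-1), d(i)) mod q, i.e.
   (d(i-1) mod q) p + d(i) div q modulo q; as p is invertible modulo q, the values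
   d(i) and F_{p,q}(d)(i) determine d(i-1) mod q. Symmetrically d(i) and F_{q,p}(d)(i)
   determine d(i-1) mod p, hence d(i-1) itself by the Chinese remainder theorem.
   Inducting on k - j, with F^n(c)(j-1) recovered from F^(n-1), F^n and F^(n+1)
   at column j, the trace at column k determines F^n(c)(j) on the whole cone
   |n| + (k - j) <= k - 1, whose apex n = 0 covers the columns 1 <= j <= k. *)
From Stdlib Require Import ZArith Lia FunctionalExtensionality.
From mathcomp Require Import all_boot zify.
Set Implicit Arguments. Unset Strict Implicit.

Lemma eqn_modMr_coprime d p a b : coprime d p ->
  (a * p == b * p %[mod d]) = (a == b %[mod d]).
Proof.
move=> cop; wlog le_ba : a b / b <= a.
  by move=> IH; case/orP: (leq_total b a) => /IH //; rewrite eq_sym [RHS]eq_sym.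
by rewrite !eqn_mod_dvd ?leq_mul2r ?le_ba ?orbT // -mulnBl Gauss_dvdl.
Qed.

Section DigitMap.

Variables (p q : nat).
Hypotheses (p_gt0 : 0 < p) (q_gt0 : 0 < q).

Lemma ltn_divq y : y < p * q -> y %/ q < p.
Proof. by move=> lt_y; rewrite ltn_divLR // mulnC. Qed.

Lemma ltn_g x y : y < p * q -> g p q x y < q * p.
Proof.
move=> /ltn_divq lt_y; rewrite /g.
have lt_x : x %% q < q by rewrite ltn_mod.
nia.
Qed.

Lemma divn_g x y : y < p * q -> g p q x y %/ p = x %% q.
Proof. by move=> /ltn_divq lt_y; rewrite /g divnMDl // divn_small ?addn0. Qed.

Lemma modn_g x y : y < p * q -> g p q x y %% p = y %/ q.
Proof. by move=> /ltn_divq lt_y; rewrite /g modnMDl modn_small. Qed.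

Lemma g_swapK x y z : y < p * q -> z < p * q -> g q p (g p q x y) (g p q y z) = y.
Proof. by move=> lt_y lt_z; rewrite {1}/g modn_g // divn_g // -divn_eq. Qed.

End DigitMap.

Lemma config_sym p q c : config p q c -> config q p c.
Proof. by move=> hc i; rewrite mulnC. Qed.

Section Dynamics.

Variables (p q : nat).
Hypotheses (p_gt0 : 0 < p) (q_gt0 : 0 < q).

Lemma config_F c : config p q c -> config p q (F p q c).
Proof.
move=> hc i; rewrite mulnC; apply: ltn_g => //.
by rewrite mulnC; apply: ltn_g.
Qed.

Lemma config_iter_F n c : config p q c -> config p q (iter n (F p q) c).
Proof. by move=> hc; elim: n => [|n IH] //=; apply: config_F. Qed.

Lemma FK c : config p q c -> F q p (F p q c) = c.
Proof.
move=> hc; apply: functional_extensionality => i.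
pose h j := g p q (c (j - 1)%Z) (c j).
have lt_h j : h j < p * q by rewrite mulnC; apply: ltn_g.
have F_h j : F p q c j = g p q (h j) (h (j + 1)%Z) by rewrite /F /h Z.add_simpl_r.
have F_pair j : g q p (F p q c (j - 1)%Z) (F p q c j) = h j.
  by rewrite !F_h Z.sub_add; apply: (g_swapK p_gt0 q_gt0); apply: lt_h.
set e := F p q c; rewrite /F /e F_pair.
have -> : F p q c i = F p q c (i + 1 - 1)%Z by rewrite Z.add_simpl_r.
by rewrite F_pair /h Z.add_simpl_r; apply: (g_swapK p_gt0 q_gt0); apply: hc.
Qed.

Lemma F_eq_pred_mod d d' i : coprime q p ->
  config p q d -> config p q d' -> d i = d' i -> F p q d i = F p q d' i ->
  d (i - 1)%Z = d' (i - 1)%Z %[mod q].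
Proof.
move=> cop hd hd' eq_i eq_F.
have lt_pair e j : config p q e -> g p q (e j) (e (j + 1)%Z) < p * q.
  by move=> he; rewrite mulnC; apply: ltn_g.
move: eq_F => /(congr1 (divn^~ p)); rewrite /F !divn_g ?lt_pair //.
rewrite /g eq_i => /eqP; rewrite eqn_modDr eqn_modMr_coprime // !modn_mod.
by move/eqP.
Qed.

End Dynamics.

Lemma F_eq_pred p q d d' i : 0 < p -> 0 < q -> coprime p q ->
  config p q d -> config p q d' -> d i = d' i ->
  F p q d i = F p q d' i -> F q p d i = F q p d' i ->
  d (i - 1)%Z = d' (i - 1)%Z.
Proof.
move=> p_gt0 q_gt0 cop hd hd' eq_i eq_F eq_F'.
have cop' : coprime q p by rewrite coprime_sym.
have eq_q := F_eq_pred_mod p_gt0 q_gt0 cop' hd hd' eq_i eq_F.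
have eq_p := F_eq_pred_mod q_gt0 p_gt0 cop (config_sym hd) (config_sym hd') eq_i eq_F'.
have: d (i - 1)%Z == d' (i - 1)%Z %[mod p * q].
  by rewrite chinese_remainder // eq_p eq_q !eqxx.
by rewrite !modn_small ?hd ?hd' // => /eqP.
Qed.

Lemma Fpow_nat p q m c : Fpow p q (Z.of_nat m) c = iter m (F p q) c.
Proof. by case: m => [|m] //=; rewrite SuccNat2Pos.id_succ. Qed.

Lemma Fpow_opp p q n c : Fpow q p (- n) c = Fpow p q n c.
Proof. by case: n. Qed.

Lemma config_Fpow p q n c : 0 < p -> 0 < q -> config p q c -> config p q (Fpow p q n c).
Proof.
move=> p_gt0 q_gt0 hc; case: n => [|m|m] //=; first exact: config_iter_F.
by apply/config_sym/config_iter_F/config_sym.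
Qed.

Lemma Fpow_succ p q n c : 0 < p -> 0 < q -> config p q c ->
  Fpow p q (n + 1) c = F p q (Fpow p q n c).
Proof.
move=> p_gt0 q_gt0 hc; have [m] : exists m, n = Z.of_nat m \/ n = (- Z.of_nat m)%Z.
  by exists (Z.abs_nat n); lia.
case=> ->.
  have -> : (Z.of_nat m + 1 = Z.of_nat m.+1)%Z by lia.
  by rewrite !Fpow_nat.
case: m => [|m] //; have -> : (- Z.of_nat m.+1 + 1 = - Z.of_nat m)%Z by lia.
rewrite !Fpow_opp !Fpow_nat iterS FK //.
by apply/config_iter_F/config_sym.
Qed.

Lemma Fpow_pred p q n c : 0 < p -> 0 < q -> config p q c ->
  Fpow p q (n - 1) c = F q p (Fpow p q n c).
Proof.
move=> p_gt0 q_gt0 hc; rewrite -!(Fpow_opp p q) Z.opp_sub_distr.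
by apply: Fpow_succ; last exact: config_sym.
Qed.

Lemma trace_eq_cone p q c c' k m : 0 < p -> 0 < q -> coprime p q ->
  config p q c -> config p q c' ->
  (forall n, (- m <= n <= m)%Z -> trace p q c k n = trace p q c' k n) ->
  forall n j, (j <= k)%Z -> (Z.abs n + (k - j) <= m)%Z ->
  Fpow p q n c j = Fpow p q n c' j.
Proof.
move=> p_gt0 q_gt0 cop hc hc' eq_tr n j le_jk.
have [t ->] : exists t : nat, j = (k - Z.of_nat t)%Z by exists (Z.to_nat (k - j)); lia.
elim: t n => [|t IH] n le_cone.
  by rewrite Z.sub_0_r; apply: eq_tr; lia.
rewrite Nat2Z.inj_succ -Z.add_1_r Z.sub_add_distr.
apply: (F_eq_pred p_gt0 q_gt0 cop); rewrite -?Fpow_succ -?Fpow_pred //.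
1,2: exact: config_Fpow.
all: apply: IH; lia.
Qed.

Theorem corollary1 (p q : nat) (c c' : Z -> nat) (k : Z) :
  2 <= p -> 2 <= q -> coprime p q ->
  config p q c -> config p q c' ->
  (0 < k)%Z ->
  (forall i : Z, (- (k - 1) <= i <= k - 1)%Z -> trace p q c k i = trace p q c' k i) ->
  forall j : Z, (1 <= j <= k)%Z -> c j = c' j.
Proof.
move=> p_ge2 q_ge2 cop hc hc' _ eq_tr j [ge1_j le_jk].
apply: (trace_eq_cone _ _ cop hc hc' eq_tr (n := 0%Z)); lia.
Qed.
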